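(* Consider the Floer triple $(\mathcal{C},f,m)$ over $\mathbb{Z}$ with $\mathcal{C}=\{\overline{c}_n:n\ge0\}\cup\{\underline{c}_n:n\ge1\}$, $f(\overline{c}_n)=-n$, $f(\underline{c}_n)=-n-1$, and whose only nonzero values of $m$ are $m(\underline{c}_n,\overline{c}_{n-1})=1$ and $m(\underline{c}_n,\overline{c}_n)=-2$ for $n\ge1$. Then, computing with integer coefficients, $\overline{HM}=\varinjlim_{b\to\infty}\varprojlim_{a\to-\infty}HM_a^b=0$, whereas the Novikov homology $HM\neq0$. In particular $HM$ and $\overline{HM}$ are not isomorphic.
   Context: A Floer triple over $\mathbb{Z}$: a set $\mathcal{C}$, $f\colon\mathcal{C}\to\mathbb{R}$, $m\colon\mathcal{C}\times\mathcal{C}\to\mathbb{Z}$ with (i) $\mathcal{C}_a^b=\{c: a\le f(c)\le b\}$ finite for all $a\le b$; (ii) $m(c_1,c_2)\ne0\Rightarrow f(c_1)<f(c_2)$; (iii) $\sum_{c_2}m(c_1,c_2)m(c_2,c_3)=0$ for all $c_1,c_3$. $CM_a^b$ is the free abelian group on $\mathcal{C}_a^b$ (zero if $a>b$), $\partial_a^b c=\sum_{c'\in\mathcal{C}_a^b}m(c',c)c'$, $HM_a^b$ its homology. For $a_1\le a_2$, $p^b_{a_2,a_1}\colon CM^b_{a_1}\to CM^b_{a_2}$ sends $c\mapsto c$ if $f(c)\ge a_2$ and to $0$ otherwise; for $b_1\le b_2$, $i_a^{b_2,b_1}$ is the inclusion; $Hp,Hi$ are the induced maps. $\varprojlim_a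 HM_a^b$ is the group of families $(x_a)_{a}$ with $Hp^b_{a_2,a_1}x_{a_1}=x_{a_2}$; the direct limit over $b$ is taken with respect to the maps induced componentwise by $Hi$. The Novikov complex consists of formal sums $\sum_{c}\gamma_c c$, $\gamma_c\in\mathbb{Z}$, with $\{c:\gamma_c\ne0,f(c)>b\}$ finite for all $b$, and $\partial\sum\gamma_c c=\sum_c\gamma_c\sum_{c'}m(c',c)c'$; $HM$ is its homology. *)

From Stdlib Require Import Reals ZArith List.
Import ListNotations.

Record FloerData := {
  fc : Type;
  ff : fc -> R;
  fm : fc -> fc -> Z
}.

Definition HasSum {C : Type} (g : C -> Z) (s : Z) : Prop :=
  exists l : list C, NoDup l /\ (forall c, g c <> 0%Z -> In c l) /\
    s = fold_right (fun c acc => (g c + acc)%Z) 0%Z l.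

Section Floer.
Variable T : FloerData.
Local Notation C := (fc T).
Local Notation f := (ff T).
Local Notation m := (fm T).

Definition is_floer_triple : Prop :=
  (forall a b : R, (a <= b)%R ->
     exists l : list C, forall c, In c l <-> (a <= f c <= b)%R)
  /\ (forall c1 c2, m c1 c2 <> 0%Z -> (f c1 < f c2)%R)
  /\ (forall c1 c3, HasSum (fun c2 => (m c1 c2 * m c2 c3)%Z) 0%Z).

Definition inW (a b : R) (c : C) : Prop := (a <= f c <= b)%R.

(* elements of CM_a^b, as coefficient functions supported in C_a^b *)
Definition chain (a b : R) (x : C -> Z) : Prop :=
  forall c, x c <> 0%Z -> inW a b c.

Definition bdry (a b : R) (x y : C -> Z) : Prop :=
  forall c', (inW a b c' -> HasSum (fun c => (m c' c * x c)%Z) (y c'))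
          /\ (~ inW a b c' -> y c' = 0%Z).

Definition cycle (a b : R) (z : C -> Z) : Prop :=
  chain a b z /\ bdry a b z (fun _ => 0%Z).

Definition homologous (a b : R) (z1 z2 : C -> Z) : Prop :=
  exists w, chain a b w /\ bdry a b w (fun c => (z1 c - z2 c)%Z).

Definition proj (a2 : R) (x : C -> Z) : C -> Z :=
  fun c => if Rle_dec a2 (f c) then x c else 0%Z.

(* a family of cycle representatives defining an element of
   lim_{<- a} HM_a^b *)
Definition invlim_elt (b : R) (z : R -> C -> Z) : Prop :=
  (forall a, cycle a b (z a)) /\
  (forall a1 a2, (a1 <= a2)%R -> homologous a2 b (proj a2 (z a1)) (z a2)).

(* \overline{HM} = lim_{-> b} lim_{<- a} HM_a^b is zero: every element,
   represented at stage b, becomes zero at some later stage b'. *)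
Definition HMbar_trivial : Prop :=
  forall (b : R) (z : R -> C -> Z), invlim_elt b z ->
    exists b', (b <= b')%R /\ forall a, homologous a b' (z a) (fun _ => 0%Z).

Definition novikov (x : C -> Z) : Prop :=
  forall b : R, exists l : list C, forall c, x c <> 0%Z -> (b < f c)%R -> In c l.

Definition nov_bdry (x y : C -> Z) : Prop :=
  forall c', HasSum (fun c => (m c' c * x c)%Z) (y c').

Definition nov_cycle (z : C -> Z) : Prop := novikov z /\ nov_bdry z (fun _ => 0%Z).

Definition nov_boundary (z : C -> Z) : Prop := exists w, novikov w /\ nov_bdry w z.

Definition HM_nontrivial : Prop := exists z, nov_cycle z /\ ~ nov_boundary z.

End Floer.

(* The concrete example. [Over n] is \overline{c}_n (n >= 0) and
   [Under n] is \underline{c}_{n+1} (index shifted so that n ranges over nat). *)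
Inductive exC : Type := Over (n : nat) | Under (n : nat).

Definition ex_f (c : exC) : R :=
  match c with
  | Over n => (- INR n)%R
  | Under n => (- INR (S n) - 1)%R
  end.

Definition ex_m (c1 c2 : exC) : Z :=
  match c1, c2 with
  | Under n, Over k =>
      if Nat.eqb k n then 1%Z else if Nat.eqb k (S n) then (-2)%Z else 0%Z
  | _, _ => 0%Z
  end.

Definition ex_triple : FloerData := {| fc := exC; ff := ex_f; fm := ex_m |}.

(** A chain [w] has boundary [y] iff [y(Under j) = w(Over j) - 2 w(Over (j+1))]
    wherever [Under j] lies in the window; the [Over] coefficients of a boundary
    always vanish.

    For [HMbar]: a cycle on [[a, b]] satisfies [y(Over k) = 2 y(Over (k+1))]
    as long as [Under k] is in the window, and the maps [p] do not change
    [Over] coefficients up to homology.  Hence in an element [(z_a)] of the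
    inverse limit every [Over] coefficient of [z_a] is divisible by every
    power of [2], so [z_a] lives on the [Under]'s.  Such a finite chain is the
    boundary of [w_i = sum_t 2^t z_a(Under (i+t))], which lies in the window
    once [b >= 0].

    For [HM]: the sum of the [Under (2i)] is a Novikov cycle, but a primitive
    [w] would satisfy [3 w_0 + 1 = 4^i (3 w_(2i) + 1)] for all [i], which has
    no integer solution ([w_0 = -1/3] only 2-adically). *)

From Stdlib Require Import Reals ZArith List Lra Lia Permutation Znumtheory.
Import ListNotations.

Section Finite_sums.
Variable C : Type.
Implicit Types (g : C -> Z) (l : list C).

Definition zsum g l : Z := fold_right (fun c acc => (g c + acc)%Z) 0%Z l.

Lemma zsum_Permutation g l1 l2 : Permutation l1 l2 -> zsum g l1 = zsum g l2.
Proof. unfold zsum; induction 1; simpl; lia. Qed.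

Lemma zsum_filter_nonzero g l :
  zsum g l = zsum g (filter (fun c => negb (g c =? 0)%Z) l).
Proof.
  unfold zsum; induction l as [|c l IH]; simpl; [reflexivity|].
  destruct (Z.eqb_spec (g c) 0); simpl; lia.
Qed.

Lemma HasSum_unique g s t : HasSum g s -> HasSum g t -> s = t.
Proof.
  intros [l1 [Hnd1 [Hsup1 ->]]] [l2 [Hnd2 [Hsup2 ->]]].
  change (zsum g l1 = zsum g l2).
  rewrite (zsum_filter_nonzero g l1), (zsum_filter_nonzero g l2).
  apply zsum_Permutation, NoDup_Permutation; try apply NoDup_filter; auto.
  intro c; rewrite !filter_In, !Bool.negb_true_iff, !Z.eqb_neq.
  split; intros [_ Hc]; auto.
Qed.

Lemma HasSum_zero g : (forall c, g c = 0%Z) -> HasSum g 0%Z.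
Proof.
  intros Hg; exists []; split; [constructor|split; [|reflexivity]].
  intros c Hc; contradiction (Hc (Hg c)).
Qed.

Lemma HasSum_pair g x y :
  x <> y -> (forall c, g c <> 0%Z -> c = x \/ c = y) -> HasSum g (g x + g y)%Z.
Proof.
  intros Hxy Hsup; exists [x; y]; split; [|split].
  - repeat constructor; simpl; intuition.
  - intros c Hc; destruct (Hsup c Hc) as [-> | ->]; simpl; auto.
  - simpl; lia.
Qed.

End Finite_sums.

Lemma Z_eq0_of_pow_divides (d n : Z) :
  (1 < d)%Z -> (forall k : nat, (d ^ Z.of_nat k | n)%Z) -> n = 0%Z.
Proof.
  intros Hd Hdiv; destruct (Z.eq_dec n 0) as [|Hn]; [assumption|exfalso].
  pose proof (Zdivide_bounds _ _ (Hdiv (Z.to_nat (Z.abs n))) Hn) as Hle.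
  rewrite Z2Nat.id, Z.abs_eq in Hle by (try apply Z.pow_nonneg; lia).
  pose proof (Z.pow_gt_lin_r d (Z.abs n) Hd (Z.abs_nonneg n)); lia.
Qed.

Lemma ex_m_Over_l (k : nat) (c : exC) : ex_m (Over k) c = 0%Z.
Proof. destruct c; reflexivity. Qed.

Lemma ex_m_Under_r (c : exC) (k : nat) : ex_m c (Under k) = 0%Z.
Proof. destruct c; reflexivity. Qed.

Lemma ex_m_Over_sum (w : exC -> Z) (k : nat) :
  HasSum (fun c => (ex_m (Over k) c * w c)%Z) 0%Z.
Proof. apply HasSum_zero; intro c; rewrite ex_m_Over_l; reflexivity. Qed.

Lemma ex_m_Under_sum (w : exC -> Z) (j : nat) :
  HasSum (fun c => (ex_m (Under j) c * w c)%Z) (w (Over j) - 2 * w (Over (S j)))%Z.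
Proof.
  replace (w (Over j) - 2 * w (Over (S j)))%Z with
    (ex_m (Under j) (Over j) * w (Over j) + ex_m (Under j) (Over (S j)) * w (Over (S j)))%Z.
  - apply (HasSum_pair _ (fun c => (ex_m (Under j) c * w c)%Z));
      [intro e; injection e; lia|].
    intros [k|k] Hk; simpl in Hk; [|lia].
    destruct (Nat.eqb_spec k j); [subst; auto|].
    destruct (Nat.eqb_spec k (S j)); [subst; auto|lia].
  - cbn [ex_m]; rewrite !Nat.eqb_refl.
    destruct (Nat.eqb_spec (S j) j); [lia|]; lia.
Qed.

Lemma ex_bdry_Over (a b : R) (x y : exC -> Z) (k : nat) :
  bdry ex_triple a b x y -> inW ex_triple a b (Over k) -> y (Over k) = 0%Z.
Proof.
  intros Hb Hw; exact (HasSum_unique _ _ _ _ (proj1 (Hb (Over k)) Hw) (ex_m_Over_sum x k)).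
Qed.

Lemma ex_bdry_Under (a b : R) (x y : exC -> Z) (j : nat) :
  bdry ex_triple a b x y -> inW ex_triple a b (Under j) ->
  y (Under j) = (x (Over j) - 2 * x (Over (S j)))%Z.
Proof.
  intros Hb Hw; exact (HasSum_unique _ _ _ _ (proj1 (Hb (Under j)) Hw) (ex_m_Under_sum x j)).
Qed.

Lemma ex_nov_bdry_Under (x y : exC -> Z) (j : nat) :
  nov_bdry ex_triple x y -> y (Under j) = (x (Over j) - 2 * x (Over (S j)))%Z.
Proof. intros Hb; exact (HasSum_unique _ _ _ _ (Hb (Under j)) (ex_m_Under_sum x j)). Qed.

Lemma ex_f_le0 (c : exC) : (ex_f c <= 0)%R.
Proof. destruct c as [n|n]; unfold ex_f; pose proof (pos_INR n); rewrite ?S_INR; lra. Qed.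

Lemma ex_finite_windows (a b : R) :
  exists l : list exC, forall c, In c l <-> (a <= ex_f c <= b)%R.
Proof.
  destruct (INR_unbounded (- a)) as [N HN].
  set (cands := map Over (seq 0 N) ++ map Under (seq 0 N)).
  assert (Hupto : forall c, (a <= ex_f c)%R -> In c cands).
  { assert (Hseq : forall n, (a <= - INR n)%R -> In n (seq 0 N)).
    { intros n Hn; apply in_seq; split; [lia|]; apply INR_lt; simpl; lra. }
    intros [n|n] Hc; unfold ex_f in Hc; unfold cands; rewrite in_app_iff, !in_map_iff.
    - left; exists n; split; [reflexivity|]; apply Hseq; lra.
    - right; exists n; split; [reflexivity|]; apply Hseq; rewrite S_INR in Hc; lra. }
  exists (filter (fun c => if Rle_dec a (ex_f c) then
                             if Rle_dec (ex_f c) b then true else false else false)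
            cands).
  intros c; rewrite filter_In.
  destruct (Rle_dec a (ex_f c)); destruct (Rle_dec (ex_f c) b);
    split; intuition (auto || discriminate || lra).
Qed.

Lemma ex_floer_triple : is_floer_triple ex_triple.
Proof.
  split; [|split]; cbn [fc ff fm ex_triple].
  - intros a b _; apply ex_finite_windows.
  - intros [n|n] [k|k] H; cbn [ex_m] in H; try lia; unfold ex_f.
    destruct (Nat.eqb_spec k n); [subst; rewrite S_INR; lra|].
    destruct (Nat.eqb_spec k (S n)); [subst; lra|lia].
  - intros c1 c3; apply HasSum_zero; intros [k|k].
    + rewrite ex_m_Over_l; lia.
    + rewrite ex_m_Under_r; lia.
Qed.

Lemma ex_cycle_Over_pow (a b : R) (y : exC -> Z) (M k : nat) :
  cycle ex_triple a b y -> (- INR k <= b)%R -> (a <= - INR (k + M) - 1)%R ->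
  y (Over k) = (2 ^ Z.of_nat M * y (Over (k + M)))%Z.
Proof.
  intros [_ Hy]; revert k; induction M as [|M IH]; intros k Hk Ha.
  - rewrite Nat.add_0_r; lia.
  - assert (Hw : inW ex_triple a b (Under k)).
    { unfold inW; cbn [ff ex_triple ex_f]; rewrite plus_INR, S_INR in Ha; rewrite S_INR.
      pose proof (pos_INR M); lra. }
    assert (HSk : (- INR (S k) <= b)%R) by (rewrite S_INR; lra).
    rewrite Nat.add_succ_r, <- Nat.add_succ_l in Ha |- *.
    pose proof (ex_bdry_Under _ _ _ _ k Hy Hw) as Hstep; cbv beta in Hstep.
    rewrite (IH (S k) HSk Ha) in Hstep.
    rewrite Nat2Z.inj_succ, Z.pow_succ_r by lia; lia.
Qed.

Lemma ex_homologous_Over (a b : R) (x y : exC -> Z) (k : nat) :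
  homologous ex_triple a b x y -> inW ex_triple a b (Over k) -> x (Over k) = y (Over k).
Proof.
  intros [w [_ Hw]] Hk; pose proof (ex_bdry_Over _ _ _ _ k Hw Hk); lia.
Qed.

Lemma ex_invlim_Over_zero (b : R) (z : R -> exC -> Z) :
  invlim_elt ex_triple b z -> forall a k, z a (Over k) = 0%Z.
Proof.
  intros [Hcyc Hcomp] a k.
  destruct (Z.eq_dec (z a (Over k)) 0) as [|Hne]; [assumption|].
  assert (Hw : inW ex_triple a b (Over k)) by exact (proj1 (Hcyc a) _ Hne).
  apply (Z_eq0_of_pow_divides 2); [lia|]; intro M.
  set (a1 := Rmin a (- INR (k + M) - 1)).
  pose proof (ex_homologous_Over _ _ _ _ k (Hcomp a1 a (Rmin_l _ _)) Hw) as Hp.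
  unfold proj in Hp; destruct (Rle_dec a (ff ex_triple (Over k))) as [_|Hn];
    [|contradiction (Hn (proj1 Hw))].
  rewrite (ex_cycle_Over_pow a1 b (z a1) M k (Hcyc a1) (proj2 Hw) (Rmin_r _ _)) in Hp.
  exists (z a1 (Over (k + M))); lia.
Qed.

Fixpoint tail_sum (y : exC -> Z) (k i : nat) : Z :=
  match k with
  | O => 0%Z
  | S k' => (y (Under i) + 2 * tail_sum y k' (S i))%Z
  end.

Lemma tail_sum_nonzero (y : exC -> Z) (k i : nat) :
  tail_sum y k i <> 0%Z -> exists n, (i <= n)%nat /\ y (Under n) <> 0%Z.
Proof.
  revert i; induction k as [|k IH]; intros i H; cbn [tail_sum] in H; [lia|].
  destruct (Z.eq_dec (y (Under i)) 0) as [e|e]; [|exists i; auto].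
  destruct (IH (S i)) as [n [Hn1 Hn2]]; [lia|]; exists n; split; [lia|auto].
Qed.

Lemma ex_Under_chain_homologous_zero (a b : R) (y : exC -> Z) :
  chain ex_triple a b y -> (forall k, y (Over k) = 0%Z) ->
  homologous ex_triple a (Rmax b 0) y (fun _ => 0%Z).
Proof.
  intros Hch Hov.
  pose proof (Rmax_l b 0); pose proof (Rmax_r b 0).
  destruct (INR_unbounded (- a)) as [N HN].
  assert (HU : forall n, (N <= n)%nat -> y (Under n) = 0%Z).
  { intros n Hn; destruct (Z.eq_dec (y (Under n)) 0) as [|e]; [assumption|].
    destruct (Hch _ e) as [H1 _]; cbn [ff ex_triple ex_f] in H1; apply le_INR in Hn; rewrite S_INR in H1; lra. }
  set (w := fun c => match c with Over i => tail_sum y (N - i) i | Under _ => 0%Z end).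
  assert (Hrel : forall j, y (Under j) = (w (Over j) - 2 * w (Over (S j)))%Z).
  { intro j; unfold w; destruct (le_lt_dec N j) as [Hj|Hj].
    - rewrite HU by exact Hj; replace (N - j)%nat with 0%nat by lia.
      replace (N - S j)%nat with 0%nat by lia; reflexivity.
    - replace (N - j)%nat with (S (N - S j)) by lia; simpl; lia. }
  exists w; split.
  - intros [i|i] Hi; [|contradiction].
    destruct (tail_sum_nonzero _ _ _ Hi) as [n [Hn1 Hn2]].
    destruct (Hch _ Hn2) as [H1 _]; cbn [ff ex_triple ex_f] in H1; unfold inW; cbn [ff ex_triple ex_f].
    apply le_INR in Hn1; rewrite S_INR in H1; pose proof (pos_INR i); lra.
  - intros [k|j]; split; rewrite ?Hov, ?Z.sub_0_r.
    + intros _; apply ex_m_Over_sum.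
    + reflexivity.
    + intros _; rewrite Hrel; apply ex_m_Under_sum.
    + intros Hn; destruct (Z.eq_dec (y (Under j)) 0) as [|e]; [assumption|].
      destruct (Hch _ e); contradiction Hn; split; lra.
Qed.

Lemma ex_HMbar_trivial : HMbar_trivial ex_triple.
Proof.
  intros b z Hz; exists (Rmax b 0); split; [apply Rmax_l|]; intro a.
  apply ex_Under_chain_homologous_zero.
  - exact (proj1 (proj1 Hz a)).
  - exact (ex_invlim_Over_zero b z Hz a).
Qed.

Definition even_unders (c : exC) : Z :=
  match c with Over _ => 0%Z | Under n => if Nat.even n then 1%Z else 0%Z end.

Lemma even_unders_nov_cycle : nov_cycle ex_triple even_unders.
Proof.
  split.
  - intros b; destruct (ex_finite_windows (Rmin b 0) 0) as [l Hl]; exists l.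
    intros c _ Hb; apply Hl; cbn [ff ex_triple] in Hb; pose proof (ex_f_le0 c).
    pose proof (Rmin_l b 0); lra.
  - intro c'; apply HasSum_zero; intros [k|k]; simpl.
    + lia.
    + rewrite ex_m_Under_r; lia.
Qed.

Lemma even_unders_not_boundary : ~ nov_boundary ex_triple even_unders.
Proof.
  intros [w [_ Hw]].
  assert (Hpow : forall i : nat,
            (3 * w (Over 0) + 1 = 4 ^ Z.of_nat i * (3 * w (Over (2 * i)) + 1))%Z).
  { induction i as [|i IH].
    { change (Z.of_nat 0) with 0%Z; rewrite Z.pow_0_r, Nat.mul_0_r; lia. }
    pose proof (ex_nov_bdry_Under _ _ (2 * i) Hw) as Heven.
    pose proof (ex_nov_bdry_Under _ _ (S (2 * i)) Hw) as Hodd.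
    cbn [even_unders] in Heven, Hodd; rewrite Nat.even_even in Heven.
    replace (Nat.even (S (2 * i))) with false in Hodd
      by (rewrite <- Nat.add_1_r, Nat.even_odd; reflexivity).
    replace (S (S (2 * i))) with (2 * S i)%nat in Hodd by lia.
    rewrite Nat2Z.inj_succ, Z.pow_succ_r, IH by lia; nia. }
  assert (3 * w (Over 0) + 1 = 0)%Z; [|lia].
  apply (Z_eq0_of_pow_divides 4); [lia|]; intro i.
  exists (3 * w (Over (2 * i)) + 1)%Z; rewrite (Hpow i); ring.
Qed.

Theorem mainTheorem9 :
  is_floer_triple ex_triple /\ HMbar_trivial ex_triple /\ HM_nontrivial ex_triple.
Proof.
  split; [exact ex_floer_triple|split; [exact ex_HMbar_trivial|]].
  exists even_unders; split; [exact even_unders_nov_cycle|exact even_unders_not_boundary].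
Qed.
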